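(* Let $\bm X$ have standard exponential margins and follow a block geometric extremal graphical model relative to a block graph $\mathcal G=(V,E)$ with gauge $g$. For distinct $i,j\in V$, let $i=v_0,v_1,\dots,v_m=j$ be the vertices of the unique shortest path from $i$ to $j$. Then $$g_{\{i,j\}}(x_i,x_j)=\min_{x_{v_1},\dots,x_{v_{m-1}}\ge0}\Big\{\sum_{k=1}^{m}g_{\{v_{k-1},v_k\}}(x_{v_{k-1}},x_{v_k})-\sum_{k=1}^{m-1}x_{v_k}\Big\},$$ i.e. $g_{\{i,j\}}$ is the bivariate marginal of the chain geometric extremal graphical model on the path vertices $v_0,\dots,v_m$ with bivariate gauges $g_{\{v_{k-1},v_k\}}$.
   Context: $\bm X=(X_k:k\in V)$ has a Lebesgue density $f$ and continuous gauge $g:[0,\infty)^d\to[0,\infty)$ with $-\log f(t\bm x_t)/t\to g(\bm x)$ whenever $\bm x_t\to\bm x\in[0,\infty)^d$; marginal gauges $g_J(\bm x_J)=\min_{x_k\ge0,\,k\notin J}g(\bm x)$, which satisfy $g_J\ge\max_{j\in J}x_j$. Block graph: connected decomposable graph with cliques $C_1,\dots,C_N$ ordered by the running intersection property, whose separators $D_k=C_k\cap\bigcup_{l<k}C_l$ are single vertices; the path vertices $v_1,\dots,v_{m-1}$ are separators. Block geometric extremal graphical model: $g(\bm x)=\sum_k g_{C_k}(\bm x_{C_k})-\sum_{k=2}^Nx_{D_k}$. *)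

From HB Require Import structures.
From mathcomp Require Import all_boot all_order all_algebra.
From mathcomp Require Import all_classical all_reals all_analysis.
Set Implicit Arguments. Unset Strict Implicit. Unset Printing Implicit Defensive.
Import Order.TTheory GRing.Theory Num.Theory.
Import numFieldNormedType.Exports.
Local Open Scope classical_set_scope.
Local Open Scope ring_scope.

Section Defs.
Variable R : realType.
Variable V : finType.

Definition orthant (x : V -> R) : Prop := forall k, 0 <= x k.

Definition cont_nonneg_on_orthant (g : (V -> R) -> R) : Prop :=
  (forall x, orthant x -> 0 <= g x) /\
  (forall x, orthant x -> forall eps : R, 0 < eps -> exists2 delta : R, 0 < delta &
     forall y, orthant y -> (forall k, `|y k - x k| < delta) -> `|g y - g x| < eps).

(* g is the gauge of the (Lebesgue) density f:
   -log f(t x_t)/t -> g(x) as t -> oo, whenever x_t -> x in [0,oo)^d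
   (coordinatewise convergence = convergence in R^d, V finite). *)
Definition gauge_of (f : (V -> R) -> R) (g : (V -> R) -> R) : Prop :=
  forall (x : V -> R) (xt : R -> V -> R),
    orthant x -> (forall t, orthant (xt t)) ->
    (forall k, (fun t => xt t k) @ +oo --> x k) ->
    (\forall t \near +oo, 0 < f (t *: xt t)) /\
    (fun t => - ln (f (t *: xt t)) / t) @ +oo --> g x.

(* marginal gauge g_J(x_J) = min_{x_k >= 0, k \notin J} g(x);
   represented as a function of the full vector x, depending only on x_J *)
Definition marg (g : (V -> R) -> R) (J : {set V}) (x : V -> R) : R :=
  inf (g @` [set y : V -> R | orthant y /\ (forall k, k \in J -> y k = x k)]).

(* standard exponential margins, at the level of gauges: g_{k}(x_k) = x_k *)
Definition std_exp_margins (g : (V -> R) -> R) : Prop :=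
  forall k x, orthant x -> marg g [set k] x = x k.

Local Close Scope classical_set_scope.

Definition simple_graph (e : rel V) : Prop :=
  symmetric e /\ irreflexive e.

Definition connected_graph (e : rel V) : Prop := forall u v, connect e u v.

Definition is_clique (e : rel V) (C : {set V}) : Prop :=
  forall u v, u \in C -> v \in C -> u != v -> e u v.

Definition is_max_clique (e : rel V) (C : {set V}) : Prop :=
  is_clique e C /\ forall w, w \notin C -> ~ is_clique e (w |: C).

(* the k-th clique of the ordering (0-based) *)
Definition clq (cs : seq {set V}) (k : nat) : {set V} := nth finset.set0 cs k.

Definition sep (cs : seq {set V}) (k : nat) : {set V} :=
  clq cs k :&: \bigcup_(l < k) clq cs l.

Definition block_graph (e : rel V) (cs : seq {set V}) : Prop :=
  [/\ simple_graph e /\ connected_graph e,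
      uniq cs,
      (forall C, C \in cs <-> is_max_clique e C),
      (forall k, (0 < k < size cs)%N ->
          exists2 l, (l < k)%N & sep cs k \subset clq cs l) &
      (forall k, (0 < k < size cs)%N -> #|sep cs k| = 1%N)].

Definition block_GEGM (cs : seq {set V}) (g : (V -> R) -> R) : Prop :=
  forall x, orthant x ->
    g x = \sum_(k < size cs) marg g (clq cs k) x
          - \sum_(1 <= k < size cs) \sum_(v in sep cs k) x v.

(* p is (the tail of) a shortest path i = v_0, v_1, ..., v_m = j, m = size p *)
Definition shortest_path (e : rel V) (i j : V) (p : seq V) : Prop :=
  [/\ path e i p, last i p = j &
      forall q, path e i q -> last i q = j -> (size p <= size q)%N].

Definition chain_obj (g : (V -> R) -> R) (i : V) (p : seq V) (y : V -> R) : R :=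
  let v := fun k => nth i (i :: p) k in
  \sum_(1 <= k < (size p).+1) marg g [set v k.-1; v k] y
  - \sum_(1 <= k < size p) y (v k).

End Defs.

From HB Require Import structures.
From mathcomp Require Import all_boot all_order all_algebra.
From mathcomp Require Import all_classical all_reals all_analysis.
From mathcomp Require Import zify.
Import Order.TTheory GRing.Theory Num.Theory.
Set Implicit Arguments. Unset Strict Implicit.

(* Along the shortest path v_0 = i, ..., v_m = j, every inner vertex w = v_t is
   a cut vertex of the block graph: each clique lies on one side of it, and the
   prefix {v_0, ..., v_t} and the next edge {v_t, v_(t+1)} lie on opposite
   sides because a shortest path is chordless.  As g is a sum of clique terms
   minus separator coordinates, exchanging the coordinates on one side between
   two points that agree at w preserves g(y) + g(y'); splicing minimisers then
   gives  g_(J u K)(x) + x_w = g_J(x) + g_K(x)  for such J and K.  Inducting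
   along the path, g_{v_0, ..., v_m} is the chain objective.  It dominates
   g_{i,j}, which fixes fewer coordinates, with equality at a minimiser of
   g_{i,j}; minimisers exist since g is continuous and g(x) >= max_k x_k. *)

Section Marginals.
Local Open Scope classical_set_scope.
Local Open Scope ring_scope.
Variables (R : realType) (V : finType) (g : (V -> R) -> R).

Definition agree_on (J : {set V}) (x y : V -> R) := forall k, k \in J -> y k = x k.

Lemma eq_marg J x x' : agree_on J x x' -> marg g J x = marg g J x'.
Proof.
move=> xx'; rewrite /marg; congr (inf (g @` _)); apply/funext => y.
by apply/propext; split=> -[oy yx]; split=> // k kJ; rewrite yx // xx'.
Qed.

Hypothesis g_cont : cont_nonneg_on_orthant g.
Hypothesis g_margins : std_exp_margins g.

Lemma marg_le J x y : orthant y -> agree_on J x y -> marg g J x <= g y.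
Proof.
move=> oy xy; apply: ge_inf; last by exists y.
by exists 0 => r [z [oz _] <-]; exact: g_cont.1.
Qed.

Lemma coord_le_gauge x v : orthant x -> x v <= g x.
Proof. by move=> ox; rewrite -(g_margins v ox); apply: marg_le. Qed.

Section Attained.
Import numFieldNormedType.Exports.
Local Notation PT := (prod_topology (fun _ : V => R)).

Lemma near_coord (x : PT) (k : V) (d : R) : 0 < d ->
  \forall y \near x, `|y k - x k| < d.
Proof.
move=> d0.
have xk_ball : nbhs (x k) (ball (x k) d) := @nbhsx_ballx R R^o (x k) d d0.
apply: (@filterS PT (nbhs x) (@nbhs_filter PT x) _ _ _
  (@proj_continuous V (fun _ => R) k x _ xk_ball)) => y /=.
by rewrite /proj -ball_normE /= distrC.
Qed.

Lemma gauge_continuous_within (A : set PT) : A `<=` @orthant R V ->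
  {within A, continuous (g : PT -> R)}.
Proof.
move=> AO; apply/(@subspace_continuousP _ A R^o) => x Ax.
apply/(@cvgrPdist_lt R R^o) => eps eps0.
have [d d0 hd] := g_cont.2 x (AO _ Ax) eps eps0.
have near_x : \forall y \near x, forall k, `|y k - x k| < d.
  apply: (@filter_forall PT V (fun k (y : PT) => `|y k - x k| < d) (nbhs x)
    (@nbhs_filter PT x)) => k.
  exact: near_coord.
apply: (@filterS PT (nbhs x) (@nbhs_filter PT x) _ _ _ near_x) => y hy Ay.
by rewrite distrC; apply: hd => //; exact: AO.
Qed.

(* Minimise over the compact box fixing x on J and [0, g x] elsewhere:
   outside it some free coordinate, hence g, exceeds g x. *)
Lemma marg_attained J x : orthant x ->
  exists y, [/\ orthant y, agree_on J x y & g y = marg g J x].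
Proof.
move=> ox.
pose B v : set R := if v \in J then [set x v] else `[0, g x]%classic.
pose A := [set z : PT | forall v, B v (z v)].
have Ax : A x.
  by move=> v; rewrite /B; case: ifP => _ //=; rewrite in_itv /= ox coord_le_gauge.
have AO : A `<=` @orthant R V.
  move=> z Az v; have := Az v; rewrite /B; case: ifP => _ /=; first by move->.
  by rewrite in_itv /= => /andP[].
have cA : compact A.
  apply: (@tychonoff V (fun _ => R) B) => v; rewrite /B; case: ifP => _.
    exact: compact_set1.
  exact: segment_compact.
have [c /set_mem Ac cmin] :=
  compact_EVT_min (ex_intro _ x Ax : A !=set0) cA (gauge_continuous_within AO).
have xc : agree_on J x c by move=> k kJ; have := Ac k; rewrite /B kJ.
exists c; split => //; first exact: AO.
apply/eqP; rewrite eq_le marg_le ?andbT //; last exact: AO.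
apply: lb_le_inf; first by exists (g x), x.
move=> _ [z [oz xz] <-].
have [Az|Az] := pselect (A z); first by apply: cmin; rewrite inE.
have [v] : exists v, ~ B v (z v) by apply/existsNP => H; apply: Az.
rewrite /B; case: ifP => vJ /=; first by rewrite xz.
rewrite in_itv /= oz /= => /negP; rewrite -ltNge => gx_lt_zv.
have gc_le_gx : g c <= g x by apply: cmin; rewrite inE.
exact: le_trans gc_le_gx (ltW (lt_le_trans gx_lt_zv (coord_le_gauge v oz))).
Qed.

End Attained.

Lemma marg_subset (J K : {set V}) x : J \subset K -> orthant x ->
  marg g J x <= marg g K x.
Proof.
move=> JK ox; have [y [oy xy <-]] := marg_attained K ox.
by apply: marg_le => // k kJ; apply: xy; exact: (fintype.subsetP JK).
Qed.

End Marginals.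

Section CutVertex.
Local Open Scope ring_scope.
Variables (R : realType) (V : finType) (g : (V -> R) -> R).
Variables (cs : seq {set V}) (w : V) (side : pred V).
Hypothesis g_block : block_GEGM cs g.
Hypothesis clq_one_side : forall k, (k < size cs)%N ->
  (forall v, v \in clq cs k -> v != w -> side v) \/
  (forall v, v \in clq cs k -> v != w -> ~~ side v).

Definition splice (y y' : V -> R) : V -> R :=
  fun v => if (v == w) || side v then y v else y' v.

Lemma splice_orthant y y' : orthant y -> orthant y' -> orthant (splice y y').
Proof. by move=> oy oy' v; rewrite /splice; case: ifP. Qed.

(* Each clique lies on one side of [w], so the clique marginals of the two
   splices are those of [y] and [y'], exchanged on the cliques off [side]. *)
Lemma gauge_splice y y' : orthant y -> orthant y' -> y w = y' w ->
  g (splice y y') + g (splice y' y) = g y + g y'.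
Proof.
move=> oy oy' yw.
have o1 := splice_orthant oy oy'; have o2 := splice_orthant oy' oy.
rewrite !g_block // addrACA [in RHS]addrACA -!opprD.
congr (_ - _).
  rewrite -!big_split /=; apply: eq_bigr => -[k kN] _ /=.
  have [on|off] := clq_one_side kN.
    by congr (_ + _); apply: eq_marg => v vk; rewrite /splice;
      case: eqP => [->|/eqP vw] //=; rewrite on.
  rewrite addrC; congr (_ + _); apply: eq_marg => v vk; rewrite /splice;
    by case: eqP => [->|/eqP vw] //=; rewrite (negbTE (off v vk vw)).
rewrite -!big_split /=; apply: eq_bigr => k _.
rewrite -!big_split /=; apply: eq_bigr => v _.
by rewrite /splice; case: ifP => _ //; rewrite addrC.
Qed.

Hypothesis g_cont : cont_nonneg_on_orthant g.
Hypothesis g_margins : std_exp_margins g.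

Variables (J K : {set V}) (z : V -> R).
Hypotheses (oz : orthant z) (wJ : w \in J) (wK : w \in K).
Hypothesis J_side : forall v, v \in J -> (v == w) || side v.
Hypothesis K_side : forall v, v \in K -> (v == w) || ~~ side v.

Lemma splice_agree_on_J y y' : agree_on J z y -> agree_on J z (splice y y').
Proof.
move=> zy v vJ; rewrite /splice.
by case/orP: (J_side vJ) => -> //; rewrite ?orbT zy.
Qed.

Lemma splice_agree_on_K y y' : y w = z w -> agree_on K z y' ->
  agree_on K z (splice y y').
Proof.
move=> yw zy' v vK; rewrite /splice.
case/orP: (K_side vK) => [/eqP->|off]; first by rewrite eqxx.
by rewrite (negbTE off) orbF; case: eqP => [->|_]; rewrite ?zy'.
Qed.

Lemma marg_setU_cut_le : marg g (J :|: K) z + z w <= marg g J z + marg g K z.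
Proof.
have [yJ [oJ zJ <-]] := marg_attained g_cont g_margins J oz.
have [yK [oK zK <-]] := marg_attained g_cont g_margins K oz.
have yw : yJ w = yK w by rewrite zJ // zK.
rewrite -gauge_splice //; apply: lerD.
  apply: (marg_le g_cont); first exact: splice_orthant.
  move=> v; rewrite inE => /orP[vJ|vK]; first exact: splice_agree_on_J.
  exact: splice_agree_on_K (zJ _ wJ) zK _ vK.
have -> : z w = splice yK yJ w by rewrite /splice eqxx /= zK.
by apply: (coord_le_gauge g_cont g_margins); exact: splice_orthant.
Qed.

Lemma marg_setU_cut_ge : marg g J z + marg g K z <= marg g (J :|: K) z + z w.
Proof.
have [y [oy zy <-]] := marg_attained g_cont g_margins (J :|: K) oz.
have [u [ou zu gu]] := marg_attained g_cont g_margins [set w] oz.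
have uw : u w = z w by rewrite zu ?inE.
rewrite -[z w](g_margins w oz) -gu -gauge_splice //; last first.
  by rewrite uw zy // inE wJ.
apply: lerD; apply: (marg_le g_cont); try exact: splice_orthant.
- by apply: splice_agree_on_J => v vJ; rewrite zy // inE vJ.
- by apply: splice_agree_on_K => // v vK; rewrite zy // inE vK orbT.
Qed.

Lemma marg_setU_cut : marg g (J :|: K) z + z w = marg g J z + marg g K z.
Proof. by apply/eqP; rewrite eq_le marg_setU_cut_le marg_setU_cut_ge. Qed.

End CutVertex.

Section CliqueTree.
Variables (V : finType) (e : rel V) (cs : seq {set V}).
Hypothesis e_block : block_graph e cs.
Local Notation N := (size cs).
Variable v0 : V.

(* [v0] is a junk value, returned only when [k = 0] or [k >= size cs]. *)
Definition sep_vertex k : V := odflt v0 [pick v in sep cs k].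

Lemma sep_vertexE k : 0 < k < N -> sep cs k = [set sep_vertex k].
Proof.
move=> kN; case: e_block => _ _ _ _ /(_ k kN) /eqP /cards1P [x sx].
by rewrite sx /sep_vertex sx; case: pickP => [y /set1P -> //|/(_ x)]; rewrite set11.
Qed.

Lemma sep_vertex_sep k : 0 < k < N -> sep_vertex k \in sep cs k.
Proof. by move=> kN; rewrite sep_vertexE // set11. Qed.

Lemma sep_vertex_clq k : 0 < k < N -> sep_vertex k \in clq cs k.
Proof. by move/sep_vertex_sep/setIP => []. Qed.

Lemma sep_vertex_earlier k : 0 < k < N ->
  exists2 l, l < k & sep_vertex k \in clq cs l.
Proof. by move/sep_vertex_sep/setIP => [] _ /bigcupP [l _]; exists l. Qed.

Lemma clq_meet l k v : l < k < N ->
  v \in clq cs l -> v \in clq cs k -> v = sep_vertex k.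
Proof.
move=> /andP[lk kN] vl vk.
have k_pos : 0 < k < N by rewrite kN (leq_ltn_trans _ lk).
have : v \in sep cs k by rewrite inE vk; apply/bigcupP; exists (Ordinal lk).
by rewrite sep_vertexE // => /set1P.
Qed.

Definition first_clq (v : V) : nat := find (fun C : {set V} => v \in C) cs.

Lemma first_clq_le v k : v \in clq cs k -> first_clq v <= k.
Proof.
move=> vk; rewrite leqNgt; apply/negP => lt_k.
by have := before_find finset.set0 lt_k; rewrite -/(clq cs k) vk.
Qed.

Lemma mem_first_clq v k : k < N -> v \in clq cs k ->
  first_clq v < N /\ v \in clq cs (first_clq v).
Proof.
move=> kN vk; split; first exact: leq_ltn_trans (first_clq_le vk) kN.
by apply: (nth_find finset.set0 (a := fun C : {set V} => v \in C)); apply/hasP;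
  exists (clq cs k); rewrite ?mem_nth.
Qed.

Definition parent k := first_clq (sep_vertex k).

Lemma parent_lt k : 0 < k < N -> parent k < k.
Proof.
move=> kN; have [l lk sl] := sep_vertex_earlier kN.
exact: leq_ltn_trans (first_clq_le sl) lk.
Qed.

Section Branch.
Variable w : V.

(* The fuel [k.+1] suffices because [parent k < k]. *)
Fixpoint branch_rec (n k : nat) : option nat :=
  if n is n'.+1 then
    if 0 < k < N then
      if sep_vertex k == w then Some k else branch_rec n' (parent k)
    else None
  else None.

Definition branch k := branch_rec k.+1 k.

Lemma branch_rec_fuel n n' k : k < n -> k < n' -> branch_rec n k = branch_rec n' k.
Proof.
elim: n n' k => [|n IH] [|n'] k //= kn kn'.
case: ifP => kN //; case: ifP => // _.
by apply: IH; apply: leq_trans (parent_lt kN) _.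
Qed.

Lemma branchE k : 0 < k < N ->
  branch k = if sep_vertex k == w then Some k else branch (parent k).
Proof.
move=> kN; rewrite {1}/branch /= kN; case: ifP => // _.
by apply: branch_rec_fuel => //; exact: parent_lt.
Qed.

Lemma branch_first_clq k v : k < N -> v \in clq cs k -> v != w ->
  branch (first_clq v) = branch k.
Proof.
move=> kN vk vw; have [_ vfirst] := mem_first_clq kN vk.
have [lt_k|] := ltnP (first_clq v) k; last first.
  move=> ge_k; have -> // : first_clq v = k.
  by apply/eqP; rewrite eqn_leq ge_k first_clq_le.
have k_pos : 0 < k < N by rewrite kN (leq_ltn_trans _ lt_k).
have sv : v = sep_vertex k by apply: clq_meet _ vfirst vk; rewrite lt_k.
by rewrite (branchE k_pos) /parent -sv (negbTE vw).
Qed.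

Lemma branch_some k l : branch k = Some l ->
  [/\ l <= k, 0 < l < N & sep_vertex l = w].
Proof.
elim/ltn_ind: k => k IH.
have [kN|kN] := boolP (0 < k < N); last by rewrite /branch /= (negbTE kN).
rewrite branchE //; case: eqP => [<- [<-]|_ /IH []] //; first exact: parent_lt.
by move=> lk ? ?; split => //; apply: leq_trans lk (ltnW (parent_lt kN)).
Qed.

Lemma branch_first_clq_self k : k < N -> w \in clq cs k -> branch (first_clq w) = None.
Proof.
move=> kN wk; have [firstN wfirst] := mem_first_clq kN wk.
case E: (branch (first_clq w)) => [l|] //.
have [lle lN lw] := branch_some E.
have ll : l = first_clq w.
  by apply/eqP; rewrite eqn_leq lle first_clq_le // -lw sep_vertex_clq.
have [l' l'l wl'] := sep_vertex_earlier lN.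
by move: (first_clq_le wl'); rewrite lw -ll leqNgt l'l.
Qed.

Lemma branch_self k : k < N -> w \in clq cs k -> k != first_clq w -> branch k = Some k.
Proof.
move=> kN wk kw; have [_ wfirst] := mem_first_clq kN wk.
have lt_k : first_clq w < k by rewrite ltn_neqAle eq_sym kw first_clq_le.
have k_pos : 0 < k < N by rewrite kN (leq_ltn_trans _ lt_k).
have sw : w = sep_vertex k by apply: clq_meet _ wfirst wk; rewrite lt_k.
by rewrite branchE // -sw eqxx.
Qed.

Lemma branch_inj k1 k2 : k1 < N -> k2 < N -> w \in clq cs k1 -> w \in clq cs k2 ->
  k1 != k2 -> branch k1 != branch k2.
Proof.
move=> k1N k2N w1 w2 k12.
have [e1|n1] := eqVneq k1 (first_clq w); have [e2|n2] := eqVneq k2 (first_clq w).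
- by rewrite e1 e2 eqxx in k12.
- by rewrite e1 (branch_first_clq_self k1N w1) (branch_self k2N w2 n2).
- by rewrite e2 (branch_first_clq_self k2N w2) (branch_self k1N w1 n1).
- by rewrite (branch_self k1N w1 n1) (branch_self k2N w2 n2).
Qed.

End Branch.

Definition is_cliqueb (C : {set V}) :=
  [forall a, forall b, (a \in C) ==> (b \in C) ==> (a != b) ==> e a b].

Lemma is_cliqueP C : reflect (is_clique e C) (is_cliqueb C).
Proof.
apply: (iffP forallP) => [H a b aC bC ab|H a].
  by have /forallP/(_ b) := H a; rewrite aC bC ab.
by apply/forallP => b; apply/implyP => aC; apply/implyP => bC; apply/implyP; exact: H.
Qed.

Lemma clq_is_clique k : k < N -> is_clique e (clq cs k).
Proof.
move=> kN; case: e_block => _ _ maxP _ _.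
by have [] := (maxP (clq cs k)).1 (mem_nth _ kN).
Qed.

(* The largest clique containing the edge is maximal, hence listed in [cs]. *)
Lemma edge_in_clq u x : e u x -> exists2 k, k < N & (u \in clq cs k) && (x \in clq cs k).
Proof.
move=> eux; case: e_block => [[[e_sym _] _] _ maxP _ _].
pose P C := [&& is_cliqueb C, u \in C & x \in C].
have P_ux : P [set u; x].
  rewrite /P !inE !eqxx orbT /= andbT; apply/is_cliqueP => a b.
  by rewrite !inE => /orP[]/eqP-> /orP[]/eqP->; rewrite ?eqxx // e_sym.
have [C /and3P [/is_cliqueP cC uC xC] Cmax] := @arg_maxnP _ _ P (fun C => #|C|) P_ux.
have /maxP Ccs : is_max_clique e C.
  split=> // v vC /is_cliqueP vcC.
  have : P (v |: C) by rewrite /P vcC !inE uC xC !orbT.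
  by move/Cmax; rewrite cardsU1 vC /= ltnn.
by exists (index C cs); rewrite ?index_mem // /clq nth_index // uC xC.
Qed.

End CliqueTree.

Section ShortestPath.
Variables (V : finType) (e : rel V) (i j : V) (p : seq V).
Hypothesis p_shortest : shortest_path e i j p.
Local Notation vt t := (nth i (i :: p) t).
Local Notation m := (size p).

Lemma shortest_path_edge t : t < m -> e (vt t) (vt t.+1).
Proof. by case: p_shortest => /(pathP i) ep _ _ /ep. Qed.

Lemma shortest_path_last : vt m = j.
Proof. by case: p_shortest => _ <- _; rewrite (last_nth i). Qed.

(* Removing the loops of a path with a repeated vertex would shorten it. *)
Lemma shortest_path_uniq : uniq (i :: p).
Proof.
case: p_shortest => ip ipj pmin; apply/negPn/negP => not_uniq.
move: ipj; case: (shortenP ip) => q iq uq sub_q iqj.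
have := pmin q iq iqj.
have card_le : #|i :: q| <= #|i :: p|.
  apply: subset_leq_card; apply/fintype.subsetP => x.
  by rewrite !inE => /orP[->//|/sub_q ->]; rewrite orbT.
have card_lt : #|i :: p| < size (i :: p).
  by rewrite ltn_neqAle card_size andbT; apply/eqP => /card_uniqP; apply/negP.
move: card_le card_lt; rewrite (card_uniqP uq) /=; lia.
Qed.

(* A chord v_t v_(t+2) would shortcut the path. *)
Lemma shortest_path_chordless t : t.+2 <= m -> ~~ e (vt t) (vt t.+2).
Proof.
case: p_shortest => ip ipj pmin tm; apply/negP => chord.
have ep : p = take t p ++ nth i p t :: nth i p t.+1 :: drop t.+2 p.
  by rewrite -(drop_nth i (n := t.+1)) // -(drop_nth i (n := t)) ?cat_take_drop // ltnW.
set a := take t p in ep; set x := nth i p t.+1 in ep chord; set r := drop t.+2 p in ep.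
have la : last i a = vt t.
  rewrite /a (last_nth i) size_take ifT; last exact: ltn_trans tm.
  by case: t {tm chord ep a x r} => [//|t] /=; rewrite nth_take.
have iq : path e i (a ++ x :: r).
  rewrite cat_path; move: ip; rewrite {1}ep cat_path la => /andP[-> /=].
  by case/and3P => _ _ ->; rewrite chord.
have iqj : last i (a ++ x :: r) = j by rewrite -ipj [in RHS]ep !last_cat.
by have := pmin _ iq iqj; rewrite [in X in X <= _]ep !size_cat /= leq_add2l ltnn.
Qed.

Definition path_prefix t : {set V} := [set x | x \in take t.+1 (i :: p)].

Lemma shortest_path_size_gt0 : i != j -> 0 < m.
Proof.
by case: p_shortest => _ + _ ij; case: (p) => //= ji; move: ij; rewrite ji eqxx.
Qed.

Lemma nth_path_neq r t : r <= m -> t <= m -> r != t -> vt r != vt t.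
Proof. by move=> rm tm rt; rewrite nth_uniq ?shortest_path_uniq. Qed.

Lemma mem_path_prefix t x : x \in path_prefix t -> exists2 r, r <= t & x = vt r.
Proof.
rewrite inE => xt; have xp := mem_take xt.
by exists (index x (i :: p)); [rewrite in_take in xt|rewrite nth_index].
Qed.

Lemma nth_path_prefix r t : r <= t -> t <= m -> vt r \in path_prefix t.
Proof.
move=> rt tm; have rm : r < size (i :: p) by apply: leq_ltn_trans rt _.
by rewrite inE in_take ?mem_nth // index_uniq // shortest_path_uniq.
Qed.

Lemma path_prefix1 : i != j -> path_prefix 1 = [set vt 0; vt 1].
Proof.
move=> ij; apply/setP => x; rewrite inE in_set2.
have := shortest_path_size_gt0 ij; case: (p) => [//|x1 p'] _ /=.
by rewrite !in_cons take0 in_nil orbF.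
Qed.

Lemma path_prefixS t : t < m ->
  path_prefix t.+1 = path_prefix t :|: [set vt t; vt t.+1].
Proof.
move=> tm; have := nth_path_prefix (leqnn t) (ltnW tm); rewrite inE => vt_t.
apply/setP => x; rewrite finset.in_setU !finset.in_set.
rewrite (take_nth i (n := t.+1) (s := i :: p)) // mem_rcons in_cons !finset.in_set1.
by case: (x =P vt t) => [->|_]; [rewrite vt_t orbT|rewrite /= orbC].
Qed.

End ShortestPath.

Section Chain.
Local Open Scope ring_scope.
Variables (R : realType) (V : finType) (e : rel V) (cs : seq {set V}).
Variables (g : (V -> R) -> R) (i j : V) (p : seq V).
Hypotheses (g_cont : cont_nonneg_on_orthant g) (g_margins : std_exp_margins g).
Hypotheses (e_block : block_graph e cs) (g_block : block_GEGM cs g).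
Hypotheses (ij : i != j) (p_shortest : shortest_path e i j p).
Local Notation vt t := (nth i (i :: p) t).
Local Notation m := (size p).
Local Notation path_prefix := (path_prefix i p).

Definition chain_obj_upto t (y : V -> R) :=
  \sum_(1 <= k < t.+1) marg g [set vt k.-1; vt k] y - \sum_(1 <= k < t) y (vt k).

Lemma chain_obj_uptoS t y : (0 < t)%N ->
  chain_obj_upto t.+1 y = chain_obj_upto t y + marg g [set vt t; vt t.+1] y - y (vt t).
Proof.
move=> t0; rewrite /chain_obj_upto (big_nat_recr t.+1) //.
rewrite [X in _ - X](big_nat_recr t) //=.
by rewrite opprD addrACA addrA.
Qed.

Local Notation branch_at w v := (branch cs i w (first_clq cs v)).

Definition path_side t v := branch_at (vt t.+1) v == branch_at (vt t.+1) (vt t).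

Lemma clq_path_side t k : (k < size cs)%N ->
  (forall v, v \in clq cs k -> v != vt t.+1 -> path_side t v) \/
  (forall v, v \in clq cs k -> v != vt t.+1 -> ~~ path_side t v).
Proof.
move=> kN; have [on|off] := boolP (branch cs i (vt t.+1) k == branch_at (vt t.+1) (vt t)).
  by left => v vk vw; rewrite /path_side (branch_first_clq e_block i kN vk vw).
by right => v vk vw; rewrite /path_side (branch_first_clq e_block i kN vk vw).
Qed.

Lemma branch_path_prefix t r : (t.+1 < m)%N -> (r <= t)%N ->
  branch_at (vt t.+1) (vt r) = branch_at (vt t.+1) (vt 0).
Proof.
move=> tm; elim: r => [//|r IH] rt.
have rm : (r < m)%N by lia.
have [k kN /andP[rk r1k]] := edge_in_clq e_block (shortest_path_edge p_shortest rm).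
have n0 : vt r != vt t.+1 by apply: (nth_path_neq p_shortest); lia.
have n1 : vt r.+1 != vt t.+1 by apply: (nth_path_neq p_shortest); lia.
rewrite (branch_first_clq e_block i kN r1k n1) -(branch_first_clq e_block i kN rk n0).
by apply: IH; lia.
Qed.

Lemma path_prefix_side t v : (t.+1 < m)%N -> v \in path_prefix t.+1 ->
  (v == vt t.+1) || path_side t v.
Proof.
move=> tm /mem_path_prefix [r rt ->].
have [r_t|->] : (r <= t)%N \/ r = t.+1 by lia.
  rewrite /path_side (branch_path_prefix tm r_t) (branch_path_prefix tm (leqnn t)).
  by rewrite eqxx orbT.
by rewrite eqxx.
Qed.

(* The edges v_t v_(t+1) and v_(t+1) v_(t+2) lie in different cliques through
   v_(t+1), since the path is chordless; their branches at v_(t+1) differ. *)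
Lemma next_edge_side t v : (t.+1 < m)%N -> v \in [set vt t.+1; vt t.+2] ->
  (v == vt t.+1) || ~~ path_side t v.
Proof.
move=> tm; rewrite in_set2 => /orP[->//|/eqP->]; apply/orP; right.
have tm' : (t < m)%N by lia.
have [k1 k1N /andP[t_k1 t1_k1]] :=
  edge_in_clq e_block (shortest_path_edge p_shortest tm').
have [k2 k2N /andP[t1_k2 t2_k2]] :=
  edge_in_clq e_block (shortest_path_edge p_shortest tm).
have n0 : vt t != vt t.+1 by apply: (nth_path_neq p_shortest); lia.
have n2 : vt t.+2 != vt t.+1 by apply: (nth_path_neq p_shortest); lia.
have k21 : k2 != k1.
  apply: contraNneq (shortest_path_chordless p_shortest tm) => k2k1.
  have n02 : vt t != vt t.+2 by apply: (nth_path_neq p_shortest); lia.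
  by apply: (clq_is_clique e_block k1N t_k1) => //; rewrite -k2k1.
rewrite /path_side (branch_first_clq e_block i k2N t2_k2 n2).
rewrite (branch_first_clq e_block i k1N t_k1 n0).
exact (branch_inj e_block i k2N k1N t1_k2 t1_k1 k21).
Qed.

Lemma marg_path_prefix y : orthant y -> forall t, (0 < t <= m)%N ->
  marg g (path_prefix t) y = chain_obj_upto t y.
Proof.
move=> oy; elim => [//|t IH] /andP[_ tm]; case: t IH tm => [_ _|t IH tm].
  by rewrite (path_prefix1 p_shortest ij) /chain_obj_upto big_nat1 big_geq // subr0.
rewrite chain_obj_uptoS // -IH; last by lia.
have wJ : vt t.+1 \in path_prefix t.+1 by apply: (nth_path_prefix p_shortest); lia.
have wK : vt t.+1 \in [set vt t.+1; vt t.+2] by rewrite in_set2 eqxx.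
have := marg_setU_cut g_block (@clq_path_side t) g_cont g_margins oy wJ wK
  (fun v => @path_prefix_side t v tm) (fun v => @next_edge_side t v tm).
by rewrite -(path_prefixS p_shortest) // => <-; rewrite addrK.
Qed.

Lemma chain_obj_marg_path y : orthant y -> chain_obj g i p y = marg g (path_prefix m) y.
Proof.
by move=> oy; rewrite marg_path_prefix // (shortest_path_size_gt0 p_shortest ij) leqnn.
Qed.

Lemma chain_obj_ge_marg y : orthant y -> marg g [set i; j] y <= chain_obj g i p y.
Proof.
move=> oy; rewrite chain_obj_marg_path //; apply: marg_subset => //.
apply/fintype.subsetP => x; rewrite in_set2 => /orP[]/eqP->.
  exact (nth_path_prefix p_shortest (leq0n m) (leqnn m)).
by rewrite -(shortest_path_last p_shortest) (nth_path_prefix p_shortest).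
Qed.

End Chain.

Local Open Scope classical_set_scope.
Local Open Scope ring_scope.

Theorem lemma2 (R : realType) (V : finType) (e : rel V) (cs : seq {set V})
    (f g : (V -> R) -> R) (i j : V) (p : seq V) (a b : R) :
  gauge_of f g -> cont_nonneg_on_orthant g ->
  std_exp_margins g ->
  block_graph e cs -> block_GEGM cs g ->
  i != j -> shortest_path e i j p ->
  0 <= a -> 0 <= b ->
  (forall y : V -> R, orthant y -> y i = a -> y j = b ->
      marg g [set i; j] y <= chain_obj g i p y) /\
  (exists y : V -> R, [/\ orthant y, y i = a, y j = b &
      chain_obj g i p y = marg g [set i; j] y]).
Proof.
move=> _ g_cont g_margins e_block g_block ij p_shortest a0 b0.
have chain_ge := chain_obj_ge_marg g_cont g_margins e_block g_block ij p_shortest.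
split; first by move=> y oy _ _; exact: chain_ge.
pose x v := if v == i then a else b.
have ox : orthant x by move=> v; rewrite /x; case: ifP.
have [y [oy xy gy]] := marg_attained g_cont g_margins [set i; j] ox.
exists y; split => //.
- by rewrite xy ?in_set2 ?eqxx // /x eqxx.
- by rewrite xy ?in_set2 ?eqxx ?orbT // /x eq_sym (negbTE ij).
apply/eqP; rewrite eq_le chain_ge // andbT.
rewrite (chain_obj_marg_path g_cont g_margins e_block g_block ij p_shortest oy).
by rewrite -(eq_marg g xy) -gy; apply: (marg_le g_cont).
Qed.
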